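(* Let $n\ge 2$. Then $\mathrm{B}=\Gamma^{\overline{03}}=\Gamma^{\overline{12}}$, where for a subspace $L\subseteq\mathrm{C}$ we write $\Gamma^{L}=\{T\in\mathrm{C}^\times: T L T^{-1}\subseteq L\}$.
   Context: Let $\mathrm{C}$ be either the real Clifford algebra $C\ell_{p,q}$ with $p+q=n$, or the complex Clifford algebra $C\ell(\mathbb{C}^n)$. It has identity $e$ and generators $e_1,\dots,e_n$ satisfying $e_ae_b+e_be_a=2\eta_{ab}e$. In the real case $\eta=\mathrm{diag}(1,\dots,1,-1,\dots,-1)$ with $p$ entries $+1$ and $q$ entries $-1$. In the complex case $\eta=I_n$. $\mathrm{C}^k$ is the grade-$k$ subspace, spanned by the products $e_{a_1}\cdots e_{a_k}$ with $a_1<\dots<a_k$. The grade involution $U\mapsto\hat U$ is the linear automorphism acting on $\mathrm{C}^k$ as $(-1)^k$. The reversion $U\mapsto\tilde U$ is the linear anti-automorphism acting on $\mathrm{C}^k$ as $(-1)^{k(k-1)/2}$. For $m=0,1,2,3$ let $\mathrm{C}^{\overline m}=\bigoplus_{k\equiv m \pmod 4}\mathrm{C}^k$, and $\mathrm{C}^{\overline{kl}}=\mathrm{C}^{\overline k}\oplus\mathrm{C}^{\overline l}$. $\Gamma^{\overline{kl}}$ denotes $\Gamma^L$ with $L=\mathrm{C}^{\overline{kl}}$. $\mathrm{C}^\times$ is the group of invertible elements. $\mathrm{Z}$ is the center: $\mathrm{Z}=\mathrm{C}^0$ for $n$ even and $\mathrm{Z}=\mathrm{C}^0\oplus\mathrm{C}^n$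 for $n$ odd. $\mathrm{Z}^\times$ is the set of invertible elements of $\mathrm{Z}$. Define $\mathrm{B}:=\{T\in\mathrm{C}^\times:\ \hat{\tilde T} T\in\mathrm{Z}^\times\}$. *)

From HB Require Import structures.
From mathcomp Require Import all_boot all_order all_algebra.
From mathcomp Require Import reals.
From mathcomp Require Import complex.
Set Implicit Arguments. Unset Strict Implicit. Unset Printing Implicit Defensive.
Import Order.TTheory GRing.Theory Num.Theory.
Local Open Scope ring_scope.

(* Explicit model of the Clifford algebra with diagonal metric eta over a field K:
   an element is its coordinate vector in the basis e_A, A ranging over subsets
   of {0,..,n-1} (e_A = e_{a1}...e_{ak}, a1<...<ak; e_set0 = identity e).     *)
Section Clifford.
Variables (K : fieldType) (n : nat) (eta : 'I_n -> K).

Definition clif := {ffun {set 'I_n} -> K}.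

Definition cl_invs (A B : {set 'I_n}) : nat :=
  #|[set ab : 'I_n * 'I_n | (ab.1 \in A) && (ab.2 \in B) && (ab.2 < ab.1)%N]|.

(* e_A e_B = cl_coef A B * e_(A symmetric-difference B) *)
Definition cl_coef (A B : {set 'I_n}) : K :=
  (-1) ^+ cl_invs A B * \prod_(i in A :&: B) eta i.

Definition cl_mul (x y : clif) : clif :=
  [ffun C => \sum_(A : {set 'I_n}) \sum_(B : {set 'I_n} | (A :|: B) :\: (A :&: B) == C)
      cl_coef A B * x A * y B].

Definition cl_one : clif := [ffun A : {set 'I_n} => if A == set0 then 1 else 0].

Definition cl_unit (x : clif) : Prop :=
  exists y, cl_mul x y = cl_one /\ cl_mul y x = cl_one.

Definition cl_hat (x : clif) : clif := [ffun A : {set 'I_n} => (-1) ^+ #|A| * x A].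
Definition cl_rev (x : clif) : clif :=
  [ffun A : {set 'I_n} => (-1) ^+ ((#|A| * (#|A|).-1) %/ 2) * x A].

Definition cl_bar2 (k l : nat) (x : clif) : Prop :=
  forall A : {set 'I_n}, x A != 0 -> (#|A| %% 4 == k)%N || (#|A| %% 4 == l)%N.

Definition cl_Z (x : clif) : Prop :=
  forall A : {set 'I_n}, x A != 0 -> (A == set0) || (odd n && (A == setT)).

Definition cl_Zunit (x : clif) : Prop :=
  cl_Z x /\ exists y, cl_Z y /\ cl_mul x y = cl_one /\ cl_mul y x = cl_one.

Definition cl_B (T : clif) : Prop :=
  cl_unit T /\ cl_Zunit (cl_mul (cl_hat (cl_rev T)) T).

Definition cl_Gamma (L : clif -> Prop) (T : clif) : Prop :=
  exists Tinv, cl_mul T Tinv = cl_one /\ cl_mul Tinv T = cl_one /\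
    forall X, L X -> L (cl_mul (cl_mul T X) Tinv).

End Clifford.

Definition eta_pq (R : realType) (p q : nat) (i : 'I_(p + q)) : R :=
  if (i < p)%N then 1 else -1.
Arguments eta_pq : clear implicits.

From HB Require Import structures.
From mathcomp Require Import all_boot all_order all_algebra.
From mathcomp Require Import reals complex.
From mathcomp Require Import zify ring.
Import Order.TTheory GRing.Theory Num.Theory.
Set Implicit Arguments. Unset Strict Implicit. Unset Printing Implicit Defensive.
Local Open Scope ring_scope.

(* We work in the coordinate model (coordinates on the basis e_A, with
   e_A e_B = coef A B e_(A Δ B)) over any field of characteristic not 2 with
   a nondegenerate diagonal metric. Four steps:
   1. Combinatorics of the structure constants: coef is a 2-cocycle, and
      e_B e_A = (-1)^(|A||B| + |A∩B|) e_A e_B.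
   2. Hence the product is associative with unit e, conj is an
      anti-automorphism acting on e_A by the sign s(|A|), and s(k) = 1 iff
      k = 0, 3 (mod 4); so C^{03} and C^{12} are the (+1)- and (-1)-eigenspaces
      of conj.
   3. For any eigenspace L = {X : conj X = eps X}, eps^2 = 1, a direct
      computation gives B ⊆ Gamma^L, and for T in Gamma^L the element
      conj(T) T commutes with L; so Gamma^L ⊆ B as soon as the self-conjugate
      centraliser of L lies in Z.
   4. That last fact holds for C^{03} and C^{12}: a basis element e_D outside
      Z anticommutes with a suitable e_B of the relevant grade class.
   The theorem then only checks that the two metrics are nondegenerate. *)

Ltac case_mem := repeat match goal with
  | |- context [?x \in ?A] => case: (x \in A)
  | |- context [(?x < ?y)%N] => case: (x < y)%N end.

Section Clifford.
Variables (K : fieldType) (n : nat) (eta : 'I_n -> K).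

Local Notation index := {set 'I_n}.
Local Notation coef := (cl_coef eta).
Local Notation "x ** y" := (cl_mul eta x y) (at level 40, left associativity).
Local Notation one := (cl_one K n).

Definition symdiff (A B : index) : index := (A :|: B) :\: (A :&: B).

Lemma in_symdiff A B x : (x \in symdiff A B) = (x \in A) (+) (x \in B).
Proof. by rewrite !inE; case_mem. Qed.

Lemma symdiffK A B : symdiff A (symdiff A B) = B.
Proof. by apply/setP => x; rewrite !in_symdiff; case_mem. Qed.

Lemma symdiffC A B : symdiff A B = symdiff B A.
Proof. by apply/setP => x; rewrite !in_symdiff; case_mem. Qed.

Lemma symdiffKr A C : symdiff (symdiff A C) C = A.
Proof. by rewrite symdiffC (symdiffC A) symdiffK. Qed.

Lemma symdiff0 A : symdiff set0 A = A.
Proof. by apply/setP => x; rewrite in_symdiff inE. Qed.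

Lemma symdiffxx A : symdiff A A = set0.
Proof. by apply/setP => x; rewrite in_symdiff inE; case_mem. Qed.

Lemma symdiff_injl A : injective (symdiff A).
Proof. exact: can_inj (symdiffK A). Qed.

Lemma symdiff_injr C : injective (symdiff^~ C).
Proof. by apply: (can_inj (g := symdiff^~ C)) => A; rewrite symdiffKr. Qed.

(* The structure constant as a product of pointwise factors, which turns
   identities between constants into truth-table checks. *)
Definition factor_if (b : bool) (x : K) : K := if b then x else 1.

Definition inv_sign (A B : index) : K :=
  \prod_(i : 'I_n) \prod_(j : 'I_n) factor_if [&& i \in A, j \in B & (j < i)%N] (-1).

Definition metric_factor (A B : index) : K :=
  \prod_i factor_if (i \in A :&: B) (eta i).

Lemma cl_coefE A B : coef A B = inv_sign A B * metric_factor A B.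
Proof.
rewrite /cl_coef /cl_invs /inv_sign /metric_factor; congr (_ * _).
  rewrite -prodr_const big_mkcond pair_bigA /=; apply: eq_bigr => -[i j] _.
  by rewrite /factor_if inE /= andbA.
by rewrite big_mkcond; apply: eq_bigr.
Qed.

Lemma prod_factor_if (T : finType) (P : pred T) (x : K) :
  \prod_i factor_if (P i) x = x ^+ #|P|.
Proof. by rewrite -prodr_const [RHS]big_mkcond. Qed.

(* Associativity of the basis products: coef is a 2-cocycle. *)
Lemma coef_cocycle A B C :
  coef A B * coef (symdiff A B) C = coef A (symdiff B C) * coef B C.
Proof.
rewrite !cl_coefE mulrACA [RHS]mulrACA; congr (_ * _).
  rewrite /inv_sign -!big_split; apply: eq_bigr => i _; rewrite -!big_split.
  apply: eq_bigr => j _; rewrite /factor_if !in_symdiff; case_mem => //=;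
  by rewrite ?mulrNN ?mulr1 ?mul1r.
rewrite /metric_factor -!big_split; apply: eq_bigr => i _ /=.
by rewrite /factor_if !inE; case_mem => //=; rewrite ?mulr1 ?mul1r.
Qed.

(* Each pair (i, j) in A x B satisfies exactly one of j < i, i = j, i < j, so
   the inversions of (B, A) and of (A, B) and the |A ∩ B| diagonal pairs
   together number |A| |B|. *)
Lemma inv_signC A B :
  inv_sign B A = (-1) ^+ (#|A| * #|B| + #|A :&: B|) * inv_sign A B.
Proof.
rewrite /inv_sign exchange_big /=.
transitivity (\prod_i \prod_j (factor_if ((i \in A) && (j \in B)) (-1) *
   factor_if [&& i \in A, j \in B & i == j] (-1) *
   factor_if [&& i \in A, j \in B & (j < i)%N] (-1))).
  apply: eq_bigr => i _; apply: eq_bigr => j _.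
  rewrite /factor_if -val_eqE /=; case: (ltngtP i j) => _;
  by case_mem; rewrite /= ?mulrNN ?mulr1 ?mul1r ?mulN1r ?opprK.
under eq_bigr => i _ do rewrite big_split /=.
rewrite big_split /=; congr (_ * _).
under eq_bigr => i _ do rewrite big_split /=.
rewrite exprD big_split /=; congr (_ * _).
  transitivity (\prod_i factor_if (i \in A) ((-1) ^+ #|B|)).
    apply: eq_bigr => i _; rewrite /factor_if; case: (i \in A) => /=.
      by rewrite -(prod_factor_if (fun j => j \in B)).
    by rewrite big1.
  by rewrite (prod_factor_if (fun i => i \in A)) -exprM mulnC.
rewrite -(prod_factor_if (fun i => i \in A :&: B)); apply: eq_bigr => i _.
rewrite (bigD1 i) //= big1 ?mulr1 => [|j /negbTE ji].
  by rewrite eqxx !andbT inE.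
by rewrite eq_sym ji !andbF.
Qed.

Lemma coefC A B : coef B A = (-1) ^+ (#|A| * #|B| + #|A :&: B|) * coef A B.
Proof. by rewrite !cl_coefE inv_signC /metric_factor setIC mulrA. Qed.

Lemma coef0l B : coef set0 B = 1.
Proof.
rewrite cl_coefE /inv_sign /metric_factor !big1 ?mulr1 // => i _.
  by rewrite set0I inE.
by rewrite big1 // => j _; rewrite inE.
Qed.

Lemma coef0r A : coef A set0 = 1.
Proof.
rewrite cl_coefE /inv_sign /metric_factor !big1 ?mulr1 // => i _.
  by rewrite setI0 inE.
by rewrite big1 // => j _; rewrite inE andbF.
Qed.

Definition conj (x : clif K n) : clif K n := cl_hat (cl_rev x).
Definition scal (a : K) (x : clif K n) : clif K n := [ffun A => a * x A].
Definition basis (B : index) : clif K n := [ffun A => if A == B then 1 else 0].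

Lemma mulE x y C :
  (x ** y) C = \sum_A coef A (symdiff A C) * x A * y (symdiff A C).
Proof.
rewrite ffunE; apply: eq_bigr => A _.
rewrite (big_pred1 (symdiff A C)) // => B /=.
by rewrite -/(symdiff A B); apply/eqP/eqP => [<-|->]; rewrite symdiffK.
Qed.

Lemma mulA x y z : x ** (y ** z) = x ** y ** z.
Proof.
apply/ffunP => D; rewrite !mulE.
under eq_bigr => A _ do rewrite mulE big_distrr /=.
under [RHS]eq_bigr => B _ do rewrite mulE big_distrr big_distrl /=.
rewrite [RHS]exchange_big /=; apply: eq_bigr => A _.
rewrite [RHS](reindex_inj (@symdiff_injl A)) /=; apply: eq_bigr => B _.
have -> : symdiff (symdiff A B) D = symdiff B (symdiff A D).
  by apply/setP => i; rewrite !in_symdiff; case_mem.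
rewrite symdiffK; set C := symdiff B (symdiff A D).
have -> : symdiff A D = symdiff B C by rewrite /C symdiffK.
have cocycle := coef_cocycle A B C.
transitivity (coef A (symdiff B C) * coef B C * (x A * y B * z C)); first by ring.
by rewrite -cocycle; ring.
Qed.

Lemma mul1x x : one ** x = x.
Proof.
apply/ffunP => C; rewrite mulE (bigD1 set0) //= big1 => [|A nA].
  by rewrite ffunE eqxx symdiff0 coef0l !mul1r addr0.
by rewrite ffunE (negbTE nA) mulr0 mul0r.
Qed.

Lemma mulx1 x : x ** one = x.
Proof.
apply/ffunP => C; rewrite mulE (bigD1 C) //= big1 => [|A nA].
  by rewrite ffunE symdiffxx eqxx coef0r !mul1r mulr1 addr0.
rewrite ffunE; case: eqP => [e|]; last by rewrite mulr0.
by case/eqP: nA; apply: (@symdiff_injr C); rewrite /= e symdiffxx.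
Qed.

Lemma scalE a x A : scal a x A = a * x A.
Proof. by rewrite ffunE. Qed.

Lemma scal1 x : scal 1 x = x.
Proof. by apply/ffunP => A; rewrite scalE mul1r. Qed.

Lemma scalA a b x : scal a (scal b x) = scal (a * b) x.
Proof. by apply/ffunP => A; rewrite !scalE mulrA. Qed.

Lemma mulZl a x y : scal a x ** y = scal a (x ** y).
Proof.
apply/ffunP => C; rewrite scalE !mulE mulr_sumr; apply: eq_bigr => A _.
by rewrite scalE; ring.
Qed.

Lemma mulZr a x y : x ** scal a y = scal a (x ** y).
Proof.
apply/ffunP => C; rewrite scalE !mulE mulr_sumr; apply: eq_bigr => A _.
by rewrite scalE; ring.
Qed.

Definition conj_sign (k : nat) : K := (-1) ^+ k * (-1) ^+ ((k * k.-1) %/ 2).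

Lemma conjE x A : conj x A = conj_sign #|A| * x A.
Proof. by rewrite /conj !ffunE mulrA. Qed.

Lemma conj_signE k : conj_sign k = (-1) ^+ (k + 'C(k, 2)).
Proof. by rewrite /conj_sign bin2 divn2 exprD. Qed.

Lemma bin2D x y : 'C(x + y, 2) = ('C(x, 2) + 'C(y, 2) + x * y)%N.
Proof.
elim: y => [|y IH]; first by rewrite addn0 bin0n addn0 muln0 addn0.
rewrite addnS binS bin1 IH binS bin1 mulnS; lia.
Qed.

(* conj is an anti-automorphism at the level of basis elements. *)
Lemma conj_sign_symdiff A B :
  conj_sign #|symdiff A B| * (-1) ^+ (#|A| * #|B| + #|A :&: B|) =
  conj_sign #|A| * conj_sign #|B|.
Proof.
have cardA := cardsID B A; have cardB := cardsID A B; rewrite setIC in cardB.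
have cardAB := cardsID A (symdiff A B).
have inA : symdiff A B :&: A = A :\: B by apply/setP => i; rewrite !inE; case_mem.
have outA : symdiff A B :\: A = B :\: A by apply/setP => i; rewrite !inE; case_mem.
rewrite inA outA in cardAB.
rewrite -cardA -cardB -cardAB !conj_signE -!exprD -signr_odd -[RHS]signr_odd.
move: #|A :&: B| #|A :\: B| #|B :\: A| => m a b; congr ((-1) ^+ _).
by rewrite !bin2D !(oddD, oddM); case: (odd m) (odd a) (odd b)
  (odd 'C(m, 2)) (odd 'C(a, 2)) (odd 'C(b, 2)) => [] [] [] [] [] [].
Qed.

Lemma conj_sign_mod4 k :
  conj_sign k = if (k %% 4 == 0)%N || (k %% 4 == 3)%N then 1 else -1.
Proof.
rewrite conj_signE; move: (divn_eq k 4) (ltn_pmod k (isT : (0 < 4)%N)).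
move: (k %/ 4)%N (k %% 4)%N => q r -> lt4.
have -> : (q * 4 = q * 2 + q * 2)%N by lia.
rewrite -signr_odd !(bin2D, oddD, oddM) /= !andbF.
by case: (odd 'C(q * 2, 2)); case: r lt4 => [|[|[|[|r]]]].
Qed.

Lemma conj_sign_sq k : conj_sign k * conj_sign k = 1.
Proof. by rewrite conj_sign_mod4; case: ifP => _; rewrite ?mulrNN mulr1. Qed.

Lemma conjK x : conj (conj x) = x.
Proof. by apply/ffunP => A; rewrite !conjE mulrA conj_sign_sq mul1r. Qed.

Lemma conj1 : conj one = one.
Proof.
apply/ffunP => A; rewrite conjE ffunE; case: eqP => [->|]; last by rewrite mulr0.
by rewrite cards0 /conj_sign !expr0 !mulr1.
Qed.

Lemma conjM x y : conj (x ** y) = conj y ** conj x.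
Proof.
apply/ffunP => C; rewrite conjE !mulE mulr_sumr.
rewrite [RHS](reindex_inj (@symdiff_injr C)) /=; apply: eq_bigr => A _.
rewrite symdiffKr !conjE; set B := symdiff A C.
have {1}-> : C = symdiff A B by rewrite /B symdiffK.
move: (conj_sign_symdiff A B) (coefC A B).
set s : K := (-1) ^+ _ => sAB ->.
have ss : s * s = 1 by rewrite /s -exprD -signr_odd oddD addbb.
have -> : conj_sign #|symdiff A B| = conj_sign #|A| * conj_sign #|B| * s.
  by rewrite -sAB -mulrA ss mulr1.
by ring.
Qed.

(* Elements of Z commute with everything: e_A with A = ∅, or A = [n] for n
   odd, commutes with every basis element. *)
Lemma Z_central w x : cl_Z w -> w ** x = x ** w.
Proof.
move=> Zw; apply/ffunP => C; rewrite !mulE.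
rewrite [RHS](reindex_inj (@symdiff_injr C)) /=; apply: eq_bigr => A _.
rewrite symdiffKr; have [->|wA] := eqVneq (w A) 0; first by rewrite !(mulr0, mul0r).
suff -> : coef (symdiff A C) A = coef A (symdiff A C) by ring.
rewrite coefC -signr_odd.
case/orP: (Zw A wA) => [/eqP->|/andP [odd_n /eqP->]].
  by rewrite cards0 set0I cards0 expr0 mul1r.
rewrite cardsT card_ord setTI !(oddD, oddM) odd_n /=.
by case: (odd _); rewrite expr0 mul1r.
Qed.

Lemma mul_basisl B y C : (basis B ** y) C = coef B (symdiff B C) * y (symdiff B C).
Proof.
rewrite mulE (bigD1 B) //= big1 => [|A nA]; first by rewrite ffunE eqxx mulr1 addr0.
by rewrite ffunE (negbTE nA) mulr0 mul0r.
Qed.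

Lemma mul_basisr B y C : (y ** basis B) C = coef (symdiff B C) B * y (symdiff B C).
Proof.
rewrite mulE (bigD1 (symdiff B C)) //= big1 => [|A nA].
  by rewrite ffunE symdiffKr eqxx mulr1 addr0 mulrC.
rewrite ffunE; case: eqP => [e|]; last by rewrite mulr0.
by case/eqP: nA; rewrite -e symdiffKr.
Qed.

Lemma Gamma_ext (L L' : clif K n -> Prop) T :
  (forall X, L X <-> L' X) -> cl_Gamma eta L T -> cl_Gamma eta L' T.
Proof.
move=> LL' [Ti [TTi [TiT stab]]]; exists Ti; do 2!split => //.
by move=> X /LL' /stab /LL'.
Qed.

Section Eigenspace.
Variable eps : K.
Hypothesis eps_sq : eps * eps = 1.

Definition conj_eigen (X : clif K n) : Prop := conj X = scal eps X.

(* If conj(T) T = z is central and invertible, conj(T) = z T^-1 and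
   conj(T X T^-1) = conj(T^-1) conj(X) conj(T) = eps T X T^-1. *)
Lemma B_sub_Gamma T : cl_B eta T -> cl_Gamma eta conj_eigen T.
Proof.
case=> -[Ti [TTi TiT]] [_ [w [Zw [zw wz]]]].
rewrite -/(conj T) in zw wz; set z := conj T ** T in zw wz.
have conjT : conj T = z ** Ti by rewrite /z -mulA TTi mulx1.
have conj_z : conj z = z by rewrite /z conjM conjK.
have conj_w : conj w = w.
  by rewrite -[LHS]mulx1 -zw mulA -[X in conj w ** X]conj_z -conjM zw conj1 mul1x.
have conj_Ti : conj Ti = T ** w.
  have -> : Ti = w ** conj T by rewrite conjT mulA wz mul1x.
  by rewrite conjM conjK conj_w.
exists Ti; do 2!split => //; move=> X eX.
rewrite /conj_eigen !conjM eX conj_Ti conjT mulZl mulZr; congr (scal eps _).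
rewrite -!mulA (mulA w X) (Z_central X Zw) TTi mulx1 conjT -(mulA X) (mulA w).
by rewrite wz mul1x.
Qed.

(* If T stabilises the eigenspace, conj(T^-1) X conj(T) = T X T^-1 for
   every eigenvector X, i.e. conj(T) T commutes with X. *)
Lemma Gamma_centralises T Ti X :
  cl_Gamma eta conj_eigen T -> T ** Ti = one -> Ti ** T = one ->
  conj_eigen X -> (conj T ** T) ** X = X ** (conj T ** T).
Proof.
move=> [Ti' [TTi' [Ti'T stab]]] TTi TiT eX.
have eTi : Ti' = Ti by rewrite -[Ti']mul1x -TiT -mulA TTi' mulx1.
subst Ti'.
have cTcTi : conj T ** conj Ti = one by rewrite -conjM TiT conj1.
have := stab X eX; rewrite /conj_eigen !conjM eX mulZl mulZr => e.
have e' : conj Ti ** (X ** conj T) = T ** X ** Ti.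
  by rewrite -[LHS]scal1 -eps_sq -scalA e scalA eps_sq scal1.
rewrite -[_ ** X]mulx1 -TiT !mulA -(mulA (conj T)) -(mulA (conj T)) -e'.
by rewrite !mulA cTcTi mul1x -mulA.
Qed.

Lemma Gamma_sub_B T :
  (forall y, conj y = y -> (forall X, conj_eigen X -> y ** X = X ** y) -> cl_Z y) ->
  cl_Gamma eta conj_eigen T -> cl_B eta T.
Proof.
move=> centraliser_Z GT; have [Ti [TTi [TiT _]]] := GT.
split; first by exists Ti.
change (cl_hat (cl_rev T)) with (conj T); set z := conj T ** T; set w := Ti ** conj Ti.
have zw : z ** w = one.
  by rewrite /z /w mulA -(mulA (conj T)) TTi mulx1 -conjM TiT conj1.
have wz : w ** z = one.
  by rewrite /z /w mulA -(mulA Ti) -conjM TTi conj1 mulx1 TiT.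
have z_comm X : conj_eigen X -> z ** X = X ** z.
  exact: Gamma_centralises GT TTi TiT.
have w_comm X : conj_eigen X -> w ** X = X ** w.
  move=> eX; rewrite -[w ** X]mulx1 -zw mulA -(mulA w) -z_comm //.
  by rewrite mulA wz mul1x.
have conj_z : conj z = z by rewrite /z conjM conjK.
have conj_w : conj w = w by rewrite /w conjM conjK.
split; first exact: centraliser_Z.
by exists w; split; first exact: centraliser_Z.
Qed.

Lemma B_iff_Gamma (L : clif K n -> Prop) T :
  (forall X, L X <-> conj_eigen X) ->
  (forall y, conj y = y -> (forall X, L X -> y ** X = X ** y) -> cl_Z y) ->
  cl_B eta T <-> cl_Gamma eta L T.
Proof.
move=> LE centraliser_Z; split=> [BT|GT].
- by apply: (Gamma_ext _ (B_sub_Gamma BT)) => X; apply: iff_sym.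
- apply: (Gamma_sub_B _ (Gamma_ext LE GT)) => y conj_y comm.
  by apply: centraliser_Z => // X /LE; exact: comm.
Qed.

End Eigenspace.

Hypothesis eta_nz : forall i, eta i != 0.
Hypothesis two_nz : (2 : K) != 0.

Lemma coef_nz A B : coef A B != 0.
Proof.
rewrite cl_coefE mulf_neq0 //.
  apply/prodf_neq0 => i _; apply/prodf_neq0 => j _.
  by rewrite /factor_if; case: ifP => _; rewrite ?oppr_eq0 oner_eq0.
by apply/prodf_neq0 => i _; rewrite /factor_if; case: ifP => _; rewrite ?oner_eq0.
Qed.

Lemma one_neq_opp1 : (1 : K) != - 1.
Proof.
apply: contra two_nz; rewrite -addr_eq0 => /eqP h.
by rewrite -[2%:R]/(1 *+ 2) mulr2n h.
Qed.

Lemma bar2_conj_eigen k l eps :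
  (forall c, conj_sign c = if (c %% 4 == k)%N || (c %% 4 == l)%N then eps else - eps) ->
  eps != - eps -> forall X, cl_bar2 k l X <-> conj_eigen eps X.
Proof.
move=> sign_cls eps_nz X; split.
- move=> LX; apply/ffunP => A; rewrite conjE scalE sign_cls.
  have [->|XA] := eqVneq (X A) 0; first by rewrite !mulr0.
  by rewrite (LX A XA).
- move=> eX A XA; apply/negPn/negP => not_cls.
  have := congr1 (fun f : clif K n => f A) eX.
  rewrite /= conjE scalE sign_cls (negbTE not_cls) => e.
  have : (eps + eps) * X A = 0 by rewrite mulrDl -{1}e mulNr addNr.
  by move/eqP; rewrite mulf_eq0 addr_eq0 (negbTE eps_nz) (negbTE XA).
Qed.

Lemma bar03_conj_eigen X : cl_bar2 0 3 X <-> conj_eigen 1 X.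
Proof. by apply: bar2_conj_eigen; [exact: conj_sign_mod4 | exact: one_neq_opp1]. Qed.

Lemma bar12_conj_eigen X : cl_bar2 1 2 X <-> conj_eigen (-1) X.
Proof.
apply: bar2_conj_eigen; last by rewrite opprK eq_sym one_neq_opp1.
move=> c; rewrite conj_sign_mod4 opprK.
by have := ltn_pmod c (isT : (0 < 4)%N); case: (c %% 4)%N => [|[|[|[|?]]]].
Qed.

Lemma basis_bar2 k l (B : index) :
  (#|B| %% 4 == k)%N || (#|B| %% 4 == l)%N -> cl_bar2 k l (basis B).
Proof.
by move=> clsB A; rewrite ffunE; have [->|_] := eqVneq A B; rewrite ?eqxx.
Qed.

Lemma anticommuting_coord y (B D : index) :
  basis B ** y = y ** basis B -> odd (#|B| * #|D| + #|B :&: D|) -> y D = 0.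
Proof.
move=> comm odd_BD; move/(congr1 (fun f : clif K n => f (symdiff B D))): comm.
rewrite mul_basisl mul_basisr symdiffK (coefC B D) -signr_odd odd_BD expr1 => e.
have : (coef B D * y D) *+ 2 = 0 by rewrite mulr2n {1}e mulN1r mulNr addNr.
move/eqP; rewrite -mulr_natr mulf_eq0 (negbTE two_nz) orbF mulf_eq0.
by rewrite (negbTE (coef_nz _ _)) => /eqP.
Qed.

Lemma subset_of_card (D : index) k : (k <= #|D|)%N ->
  exists B : index, B \subset D /\ #|B| = k.
Proof.
elim: k => [|k IH] lek; first by exists set0; rewrite sub0set cards0.
have [B [sBD cB]] := IH (ltnW lek).
have /set0Pn [x] : D :\: B != set0.
  by rewrite -card_gt0 cardsD (setIidPr sBD) cB subn_gt0.
rewrite inE => /andP [xB xD].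
exists (x |: B); split; first by rewrite subUset sub1set xD sBD.
by rewrite cardsU1 xB cB.
Qed.

Lemma not_setT (D : index) : D != setT -> exists x, x \notin D.
Proof.
move=> DT; apply/existsP; apply: contraR DT; rewrite negb_exists => /forallP h.
by apply/eqP/setP => x; rewrite inE; have := h x; rewrite negbK.
Qed.

Lemma not_Z_odd_missing (D : index) :
  ~~ ((D == set0) || (odd n && (D == setT))) -> odd #|D| -> exists x, x \notin D.
Proof.
move=> notZ odd_D; apply: not_setT; apply: contra notZ => /eqP DT.
by move: odd_D; rewrite DT cardsT card_ord => ->; rewrite eqxx orbT.
Qed.

(* The self-conjugate centraliser of C^{03} is Z: e_D with |D| = 0 (mod 4),
   D nonempty, anticommutes with e_B for B ⊆ D, |B| = 3; for |D| = 3 (mod 4),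
   D ≠ [n], take B = {x} ∪ B0 with x ∉ D, B0 ⊆ D, |B0| = 2; and
   |D| = 1, 2 (mod 4) is excluded by conj y = y. *)
Lemma centraliser_bar03 y :
  conj y = y -> (forall X, cl_bar2 0 3 X -> y ** X = X ** y) -> cl_Z y.
Proof.
move=> conj_y comm D yD; apply/negPn/negP => notZ.
have D0 : D != set0 by apply: contraNneq notZ => ->; rewrite eqxx.
have y03 : cl_bar2 0 3 y by apply/bar03_conj_eigen; rewrite /conj_eigen scal1.
have clsD := y03 D yD.
have comm_basis (B : index) : (#|B| %% 4 == 0)%N || (#|B| %% 4 == 3)%N ->
    basis B ** y = y ** basis B.
  by move=> clsB; rewrite comm //; apply: basis_bar2.
move/negP: yD; apply; apply/eqP; case/orP: clsD => /eqP clsD.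
- have le3 : (3 <= #|D|)%N by move: D0; rewrite -card_gt0; lia.
  have [B [sBD cB]] := subset_of_card le3.
  apply: (anticommuting_coord (B := B)); first by apply: comm_basis; rewrite cB.
  by rewrite (setIidPl sBD) cB oddD oddM /= -(odd_mod #|D| (erefl : odd 4 = false)) clsD.
- have [x xD] : exists x, x \notin D.
    apply: not_Z_odd_missing => //.
    by rewrite -(odd_mod #|D| (erefl : odd 4 = false)) clsD.
  have [B0 [sB0 cB0]] : exists B0 : index, B0 \subset D /\ #|B0| = 2%N.
    by apply: subset_of_card; move: clsD; lia.
  have xB0 : x \notin B0 by apply: contra xD; exact: (subsetP sB0).
  have BD : (x |: B0) :&: D = B0.
    apply/setP => u; rewrite !inE; case: eqP => [->|_] /=.
      by rewrite (negbTE xD) (negbTE xB0).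
    by case uB: (u \in B0); rewrite ?(subsetP sB0 _ uB).
  have cB : #|x |: B0| = 3%N by rewrite cardsU1 xB0 cB0.
  apply: (anticommuting_coord (B := x |: B0)).
    by apply: comm_basis; rewrite cB.
  by rewrite cB BD cB0 oddD oddM /= -(odd_mod #|D| (erefl : odd 4 = false)) clsD.
Qed.

(* The centraliser of C^{12} is Z: e_D outside Z anticommutes with e_x for
   some index x (x ∉ D if |D| is odd, x ∈ D if |D| is even). *)
Lemma centraliser_bar12 y :
  (forall X, cl_bar2 1 2 X -> y ** X = X ** y) -> cl_Z y.
Proof.
move=> comm D yD; apply/negPn/negP => notZ.
have D0 : D != set0 by apply: contraNneq notZ => ->; rewrite eqxx.
move/negP: yD; apply; apply/eqP.
have comm_x x : basis [set x] ** y = y ** basis [set x].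
  by rewrite comm //; apply: basis_bar2; rewrite cards1.
case odd_D: (odd #|D|).
- have [x xD] := not_Z_odd_missing notZ odd_D.
  apply: (anticommuting_coord (comm_x x)).
  have -> : [set x] :&: D = set0.
    by apply/setP => u; rewrite !inE; case: eqP => // ->; rewrite (negbTE xD).
  by rewrite cards1 cards0 mul1n addn0 odd_D.
- have /set0Pn [x xD] := D0.
  apply: (anticommuting_coord (comm_x x)).
  have -> : [set x] :&: D = [set x] by apply/setIidPl; rewrite sub1set.
  by rewrite cards1 mul1n oddD odd_D.
Qed.

Theorem B_eq_Gamma03_Gamma12 T :
  (cl_B eta T <-> cl_Gamma eta (cl_bar2 0 3) T) /\
  (cl_B eta T <-> cl_Gamma eta (cl_bar2 1 2) T).
Proof.
split.
- apply: (@B_iff_Gamma 1); first by rewrite mulr1.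
    exact: bar03_conj_eigen.
  by move=> y conj_y; exact: centraliser_bar03.
- apply: (@B_iff_Gamma (-1)); first by rewrite mulrNN mulr1.
    exact: bar12_conj_eigen.
  by move=> y _; exact: centraliser_bar12.
Qed.

End Clifford.

Theorem mainTheorem8 :
  (forall (R : realType) (p q : nat), (2 <= p + q)%N ->
     forall T : clif R (p + q),
       (cl_B (eta_pq R p q) T <-> cl_Gamma (eta_pq R p q) (cl_bar2 0 3) T) /\
       (cl_B (eta_pq R p q) T <-> cl_Gamma (eta_pq R p q) (cl_bar2 1 2) T)) /\
  (forall (R : realType) (n : nat), (2 <= n)%N ->
     forall T : clif R[i] n,
       (cl_B (fun _ : 'I_n => 1 : R[i]) T <->
          cl_Gamma (fun _ : 'I_n => 1 : R[i]) (cl_bar2 0 3) T) /\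
       (cl_B (fun _ : 'I_n => 1 : R[i]) T <->
          cl_Gamma (fun _ : 'I_n => 1 : R[i]) (cl_bar2 1 2) T)).
Proof.
split.
- move=> R p q _ T; apply: B_eq_Gamma03_Gamma12; last by rewrite pnatr_eq0.
  by move=> i; rewrite /eta_pq; case: ifP => _; rewrite ?oppr_eq0 oner_eq0.
- move=> R n _ T; apply: B_eq_Gamma03_Gamma12; last by rewrite pnatr_eq0.
  by move=> i; rewrite oner_eq0.
Qed.
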